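(* Let $\Omega_2=\{\omega_1,\omega_2\}$ with $\omega_1\neq\omega_2$, and $\mathcal{A}_2=2^{\Omega_2}$. A $q$-measure $\mu$ on $\mathcal{A}_2$ actualizes the coevent $\omega_1^*\oplus\omega_2^*$ if and only if $$\mu(\Omega_2)=\max(\mu(\{\omega_1\}),\mu(\{\omega_2\}))-\min(\mu(\{\omega_1\}),\mu(\{\omega_2\})).$$
   Context: Let $\Omega$ be a finite nonempty set and $\mathcal{A}=2^\Omega$. A coevent is a map $\phi:\mathcal{A}\to\{0,1\}$ with $\phi(\emptyset)=0$. For $\omega\in\Omega$ the evaluation map $\omega^*$ is the coevent with $\omega^*(A)=1$ if $\omega\in A$ and $0$ otherwise. Coevents are combined pointwise: $(\phi\oplus\psi)(A)=\phi(A)+\psi(A) \bmod 2$ and $(\phi\psi)(A)=\phi(A)\psi(A)$. For $f:\Omega\to[0,\infty)$ and a coevent $\phi$, the $q$-integral is $\int f\,d\phi=\int_0^\infty \phi(\{\omega\in\Omega: f(\omega)>\lambda\})\,d\lambda$ (Lebesgue measure in $\lambda$), and for $A\in\mathcal{A}$, $\int_A f\,d\phi=\int f\chi_A\,d\phi$. A $q$-measure is a map $\mu:\mathcal{A}\to[0,\infty)$ such that for all pairwise disjoint $A,B,C\in\mathcal{A}$: $\mu(A\cup B\cup C)=\mu(A\cup B)+\mu(A\cup C)+\mu(B\cup C)-\mu(A)-\mu(B)-\mu(C)$. The $q$-measure $\mu$ actualizes $\phi$ if there is a symmetric function $f:\Omega\times\Omega\to(0,\infty)$ such that for all $A\in\mathcal{A}$,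 $\mu(A)=\int g_A\,d\phi$, where $g_A(\omega')=\int_A f(\cdot,\omega')\,d\phi$ (the $q$-integral over $A$ of $\omega\mapsto f(\omega,\omega')$). *)

From Stdlib Require Import Reals.
Open Scope R_scope.

Definition set (T : Type) := T -> bool.
Definition set0 {T : Type} : set T := fun _ => false.
Definition setT {T : Type} : set T := fun _ => true.
Definition setU {T : Type} (A B : set T) : set T := fun w => orb (A w) (B w).
Definition disj {T : Type} (A B : set T) : Prop := forall w, andb (A w) (B w) = false.

Definition coev (T : Type) := set T -> bool.
Definition is_coevent {T : Type} (phi : coev T) : Prop := phi set0 = false.

Definition evalc {T : Type} (w : T) : coev T := fun A => A w.
Definition coxor {T : Type} (phi psi : coev T) : coev T := fun A => xorb (phi A) (psi A).
Definition comul {T : Type} (phi psi : coev T) : coev T := fun A => andb (phi A) (psi A).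

Definition b2R (b : bool) : R := if b then 1 else 0.

Definition level {T : Type} (f : T -> R) (l : R) : set T :=
  fun w => if Rlt_dec l (f w) then true else false.

(* q-integral: is_qint phi f r  <->  int_0^oo phi({f > l}) dl = r.
   The integrand vanishes for l >= max f (empty level set, phi(empty)=0), so the
   improper integral equals the Riemann integral over [0, M] for any upper bound
   M of f; we require existence of such an M with the Riemann integral equal r. *)
Definition is_qint {T : Type} (phi : coev T) (f : T -> R) (r : R) : Prop :=
  exists M : R, 0 <= M /\ (forall w, f w <= M) /\
    exists pr : Riemann_integrable (fun l => b2R (phi (level f l))) 0 M,
      RiemannInt pr = r.

Definition is_qint_on {T : Type} (phi : coev T) (A : set T) (f : T -> R) (r : R) : Prop :=
  is_qint phi (fun w => if A w then f w else 0) r.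

Definition qmeasure {T : Type} (mu : set T -> R) : Prop :=
  (forall A, 0 <= mu A) /\
  forall A B C : set T, disj A B -> disj A C -> disj B C ->
    mu (setU A (setU B C)) =
      mu (setU A B) + mu (setU A C) + mu (setU B C) - mu A - mu B - mu C.

Definition actualizes {T : Type} (mu : set T -> R) (phi : coev T) : Prop :=
  exists f : T -> T -> R,
    (forall x y, 0 < f x y) /\ (forall x y, f x y = f y x) /\
    forall A : set T, exists gA : T -> R,
      (forall w', is_qint_on phi A (fun w => f w w') (gA w')) /\
      is_qint phi gA (mu A).

(* For the coevent flip = w1* (+) w2*, the level set {g > l} is charged exactly
   when l lies between the positive parts of g w1 and g w2, so the q-integral of
   g is the distance |g+(w1) - g+(w2)|.  Iterating this for a kernel f with
   a = f(w1,w1), b = f(w1,w2), c = f(w2,w2) gives mu{w1} = |a - b|,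
   mu{w2} = |b - c| and mu(Omega) = ||a - b| - |b - c||, which is max - min of
   the two singleton values.  Conversely a = 1 + mu{w1}, b = 1, c = 1 + mu{w2}
   realizes any q-measure satisfying the identity. *)
From Stdlib Require Import Reals Lra Lia List FunctionalExtensionality.
Import ListNotations.
Open Scope R_scope.

Ltac destruct_R_decisions :=
  repeat match goal with
  | |- context [Rlt_dec ?a ?b] => destruct (Rlt_dec a b)
  | |- context [Rle_dec ?a ?b] => destruct (Rle_dec a b)
  | |- context [Rcase_abs ?a] => destruct (Rcase_abs a)
  | H : context [Rlt_dec ?a ?b] |- _ => destruct (Rlt_dec a b)
  | H : context [Rle_dec ?a ?b] |- _ => destruct (Rle_dec a b)
  end; simpl in *; try lra.

Lemma Rmax_minus_Rmin (x y : R) : Rmax x y - Rmin x y = Rabs (x - y).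
Proof. unfold Rmax, Rmin, Rabs; destruct_R_decisions. Qed.

Lemma qmeasure_set0 {T : Type} (mu : set T -> R) : qmeasure mu -> mu set0 = 0.
Proof.
  intros [_ Hgrade2].
  assert (Hdisj : disj (@set0 T) set0) by (intro; reflexivity).
  specialize (Hgrade2 set0 set0 set0 Hdisj Hdisj Hdisj).
  change (setU set0 (setU set0 set0)) with (@set0 T) in Hgrade2.
  change (setU set0 set0) with (@set0 T) in Hgrade2.
  lra.
Qed.

Section IntervalIndicator.

Variables (h : R -> R) (a b M : R).
Hypotheses (Ha : 0 <= a) (Hab : a <= b) (HbM : b <= M).
Hypothesis h_below : forall l, 0 < l < a -> h l = 0.
Hypothesis h_inside : forall l, a < l < b -> h l = 1.
Hypothesis h_above : forall l, b < l < M -> h l = 0.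

Lemma indicator_StepFun : IsStepFun h 0 M.
Proof.
  exists [0; a; b; M], [0; 1; 0].
  unfold adapted_couple; repeat split.
  - intros [|[|[|i]]] Hi; simpl in *; try lra; lia.
  - simpl; unfold Rmin; destruct_R_decisions.
  - simpl; unfold Rmax; destruct_R_decisions.
  - intros [|[|[|i]]] Hi; simpl in Hi; try lia; simpl; intros l Hl; unfold open_interval in Hl.
    + apply h_below; lra.
    + apply h_inside; lra.
    + apply h_above; lra.
Qed.

Lemma indicator_integrable : Riemann_integrable h 0 M.
Proof.
  intro eps.
  exists (mkStepFun indicator_StepFun), (mkStepFun (StepFun_P4 0 M 0)).
  split.
  - intros l _; simpl; unfold fct_cte.
    rewrite Rminus_diag, Rabs_R0; lra.
  - rewrite StepFun_P18, Rmult_0_l, Rabs_R0; apply cond_pos.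
Qed.

Lemma RiemannInt_indicator (pr : Riemann_integrable h 0 M) : RiemannInt pr = b - a.
Proof.
  assert (pr_0a : Riemann_integrable h 0 a) by (apply RiemannInt_P22 with M; auto; lra).
  assert (pr_aM : Riemann_integrable h a M) by (apply RiemannInt_P23 with 0; auto; lra).
  assert (pr_ab : Riemann_integrable h a b) by (apply RiemannInt_P22 with M; auto; lra).
  assert (pr_bM : Riemann_integrable h b M) by (apply RiemannInt_P23 with a; auto; lra).
  rewrite <- (RiemannInt_P26 pr_0a pr_aM pr), <- (RiemannInt_P26 pr_ab pr_bM pr_aM).
  rewrite (RiemannInt_P18 pr_0a (RiemannInt_P14 0 a 0)) by (auto; intros; apply h_below; lra).
  rewrite (RiemannInt_P18 pr_ab (RiemannInt_P14 a b 1)) by (auto; intros; apply h_inside; lra).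
  rewrite (RiemannInt_P18 pr_bM (RiemannInt_P14 b M 0)) by (auto; intros; apply h_above; lra).
  rewrite !RiemannInt_P15; lra.
Qed.

End IntervalIndicator.

Definition flip : coev bool := coxor (evalc true) (evalc false).

Definition flip_int (g : bool -> R) : R := Rabs (Rmax (g true) 0 - Rmax (g false) 0).

Section FlipIntegral.

Variable g : bool -> R.

Let lo := Rmin (Rmax (g true) 0) (Rmax (g false) 0).
Let hi := Rmax (Rmax (g true) 0) (Rmax (g false) 0).
Let flip_level (l : R) := b2R (flip (level g l)).

Lemma lo_nonneg : 0 <= lo.
Proof. unfold lo, Rmin, Rmax; destruct_R_decisions. Qed.

Lemma lo_le_hi : lo <= hi.
Proof. unfold lo, hi, Rmin, Rmax; destruct_R_decisions. Qed.

Lemma hi_le_bound (M : R) : 0 <= M -> (forall w, g w <= M) -> hi <= M.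
Proof.
  intros HM Hg; generalize (Hg true) (Hg false).
  unfold hi, Rmax; destruct_R_decisions.
Qed.

Lemma flip_level_below (l : R) : 0 < l < lo -> flip_level l = 0.
Proof. unfold flip_level, lo, flip, coxor, evalc, level, Rmin, Rmax; destruct_R_decisions. Qed.

Lemma flip_level_inside (l : R) : lo < l < hi -> flip_level l = 1.
Proof. unfold flip_level, lo, hi, flip, coxor, evalc, level, Rmin, Rmax; destruct_R_decisions. Qed.

Lemma flip_level_above (l : R) : hi < l -> flip_level l = 0.
Proof. unfold flip_level, hi, flip, coxor, evalc, level, Rmax; destruct_R_decisions. Qed.

Lemma is_qint_flip_iff (r : R) : is_qint flip g r <-> r = flip_int g.
Proof.
  assert (Hspan : hi - lo = flip_int g) by apply Rmax_minus_Rmin.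
  pose proof lo_nonneg; pose proof lo_le_hi.
  pose proof flip_level_below as Hbelow; pose proof flip_level_inside as Hinside.
  assert (Habove : forall M l, hi < l < M -> flip_level l = 0)
    by (intros; apply flip_level_above; lra).
  split.
  - intros [M [HM [Hg [pr <-]]]].
    pose proof (hi_le_bound M HM Hg).
    rewrite <- Hspan; apply (RiemannInt_indicator flip_level lo hi M); auto; apply Habove.
  - intros ->.
    assert (Hg : forall w, g w <= hi) by (intros []; unfold hi, Rmax; destruct_R_decisions).
    exists hi; repeat split; [lra | exact Hg |].
    assert (Hint : Riemann_integrable flip_level 0 hi)
      by (apply (indicator_integrable flip_level lo hi hi); auto; [lra | apply Habove]).
    exists Hint; rewrite <- Hspan.
    apply (RiemannInt_indicator flip_level lo hi hi); auto; [lra | apply Habove].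
Qed.

End FlipIntegral.

Definition flip_kernel_measure (f : bool -> bool -> R) (A : set bool) : R :=
  flip_int (fun w' => flip_int (fun w => if A w then f w w' else 0)).

Lemma actualizes_flip_iff (mu : set bool -> R) :
  actualizes mu flip <->
  exists f : bool -> bool -> R,
    (forall x y, 0 < f x y) /\ (forall x y, f x y = f y x) /\
    forall A, mu A = flip_kernel_measure f A.
Proof.
  unfold actualizes, is_qint_on; split.
  - intros [f [Hpos [Hsym Hf]]]; exists f; repeat split; auto.
    intros A; destruct (Hf A) as [gA [HgA HmuA]].
    apply is_qint_flip_iff in HmuA; rewrite HmuA; unfold flip_kernel_measure.
    f_equal; extensionality w'; apply is_qint_flip_iff, HgA.
  - intros [f [Hpos [Hsym Hf]]]; exists f; repeat split; auto.
    intros A; eexists; split.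
    + intros w'; apply is_qint_flip_iff; reflexivity.
    + apply is_qint_flip_iff, Hf.
Qed.

Lemma flip_int_nonneg (g : bool -> R) :
  0 <= g true -> 0 <= g false -> flip_int g = Rabs (g true - g false).
Proof. intros; unfold flip_int; rewrite !Rmax_left by lra; reflexivity. Qed.

Lemma flip_kernel_measureE (f : bool -> bool -> R) (A : set bool) :
  (forall x y, 0 <= f x y) ->
  let fA x y := if A x then f x y else 0 in
  flip_kernel_measure f A =
  Rabs (Rabs (fA true true - fA false true) - Rabs (fA true false - fA false false)).
Proof.
  intros f_nonneg fA.
  assert (fA_nonneg : forall x y, 0 <= fA x y) by (intros x y; unfold fA; destruct (A x); auto with real).
  unfold flip_kernel_measure.
  rewrite flip_int_nonneg by apply Rabs_pos.
  rewrite !flip_int_nonneg by apply fA_nonneg.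
  reflexivity.
Qed.

Lemma bool_set_cases (A : set bool) :
  A = set0 \/ A = setT \/ A = (fun w => w) \/ A = negb.
Proof.
  destruct (A true) eqn:Htrue, (A false) eqn:Hfalse; [right; left | right; right; left
    | right; right; right | left]; extensionality w; destruct w; auto.
Qed.

Definition flip_witness (m1 m2 : R) (x y : bool) : R :=
  if x then (if y then 1 + m1 else 1) else (if y then 1 else 1 + m2).

Theorem theorem4p1 (mu : set bool -> R) (Hmu : qmeasure mu) :
  actualizes mu (coxor (evalc true) (evalc false)) <->
  mu setT = Rmax (mu (fun w => w)) (mu negb) - Rmin (mu (fun w => w)) (mu negb).
Proof.
  rewrite Rmax_minus_Rmin, actualizes_flip_iff; split.
  - intros [f [Hpos [Hsym Hf]]].
    assert (f_nonneg : forall x y, 0 <= f x y) by (intros; apply Rlt_le, Hpos).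
    rewrite !Hf, !flip_kernel_measureE by exact f_nonneg; simpl.
    rewrite (Hsym false true).
    generalize (Hpos true true) (Hpos true false) (Hpos false false).
    unfold Rabs; destruct_R_decisions.
  - intros HmuT.
    set (m1 := mu (fun w => w)) in *; set (m2 := mu negb) in *.
    assert (m1_nonneg : 0 <= m1) by apply Hmu.
    assert (m2_nonneg : 0 <= m2) by apply Hmu.
    exists (flip_witness m1 m2); split; [intros [] []; simpl; lra|].
    split; [intros [] []; reflexivity|].
    intros A; rewrite flip_kernel_measureE by (intros [] []; simpl; lra).
    destruct (bool_set_cases A) as [-> | [-> | [-> | ->]]]; simpl;
      [rewrite (qmeasure_set0 mu Hmu) | rewrite HmuT | fold m1 | fold m2];
      unfold Rabs; destruct_R_decisions.
Qed.
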